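(* Let $w$ be a nonnegative continuous weight on $[-1,1]$ and $\{p_l\}$ the orthonormal polynomials (positive leading coefficients) with recurrence $b_{l+1}p_{l+1}(x)=(x-a_l)p_l(x)-b_lp_{l-1}(x)$, $p_{-1}=0$, $p_0=1/b_0$, $a_l\in\mathbb{R}$, $b_l>0$. Let $0\le m\le n$, $\gamma\in\mathbb{R}$, $\delta\ge0$. Then for $x\ne y$: $\sum_{k=m}^np_k(x)p_{k-m}(y,m)=b_{n+1}\dfrac{p_{n+1}(x)p_{n-m}(y,m)-p_{n-m+1}(y,m)p_n(x)}{x-y}+b_m\dfrac{p_{m-1}(x)}{x-y}$, and $\sum_{k=m}^np_k(x)p_{k-m}(y,m,\gamma,\delta)=b_{n+1}\dfrac{p_{n+1}(x)p_{n-m}(y,m,\gamma,\delta)-p_{n-m+1}(y,m,\gamma,\delta)p_n(x)}{x-y}+\dfrac{p_m(x)((\delta-1)y-\gamma)}{x-y}+b_m\dfrac{p_{m-1}(x)}{x-y}$.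
   Context: Associated polynomials: $p_{-1}(x,m)=0$, $p_0(x,m)=1$, $b_{m+l+1}p_{l+1}(x,m)=(x-a_{m+l})p_l(x,m)-b_{m+l}p_{l-1}(x,m)$ for $l\ge0$. Scaled co-recursive associated polynomials: $p_0(x,m,\gamma,\delta)=1$, $p_1(x,m,\gamma,\delta)=(\delta x-a_m-\gamma)/b_{m+1}$, and $b_{m+l+1}p_{l+1}(x,m,\gamma,\delta)=(x-a_{m+l})p_l(x,m,\gamma,\delta)-b_{m+l}p_{l-1}(x,m,\gamma,\delta)$ for $l\ge1$. *)

From Stdlib Require Import Reals.
From Coquelicot Require Import Coquelicot.
Open Scope R_scope.

(* Generic three-term recurrence (shifted by one so that index -1 exists):
   rec3 c0 c1 a b l x returns the pair (q_{l-1}(x), q_l(x)) where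
   q_{-1} = c0, q_0 = c1 and
   b (l+1) * q_{l+1} = (x - a l) * q_l - b l * q_{l-1}. *)
Fixpoint rec3 (c0 c1 : R) (a b : nat -> R) (l : nat) (x : R) : R * R :=
  match l with
  | O => (c0, c1)
  | S l' => let (u, v) := rec3 c0 c1 a b l' x in
            (v, ((x - a l') * v - b l' * u) / b (S l'))
  end.

Definition opoly (a b : nat -> R) (l : nat) (x : R) : R :=
  snd (rec3 0 (/ b O) a b l x).

Definition opoly_prev (a b : nat -> R) (l : nat) (x : R) : R :=
  fst (rec3 0 (/ b O) a b l x).

Definition assoc_poly (a b : nat -> R) (m l : nat) (x : R) : R :=
  snd (rec3 0 1 (fun k => a (m + k)%nat) (fun k => b (m + k)%nat) l x).

(* Scaled co-recursive associated polynomials p_l(x, m, gamma, delta):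
   p_0 = 1, p_1 = (delta x - a_m - gamma)/b_{m+1}, and for l >= 1
   b_{m+l+1} p_{l+1} = (x - a_{m+l}) p_l - b_{m+l} p_{l-1}. *)
Definition scr_poly (a b : nat -> R) (m : nat) (g d : R) (l : nat) (x : R) : R :=
  match l with
  | O => 1
  | S l' => snd (rec3 1 ((d * x - a m - g) / b (S m))
                   (fun k => a (m + S k)%nat) (fun k => b (m + S k)%nat) l' x)
  end.

From Stdlib Require Import Reals Lia.
From Coquelicot Require Import Coquelicot.
Open Scope R_scope.

(* Both identities are instances of the Christoffel–Darboux summation for two
   solutions of one three-term recurrence, evaluated at x and at y: the
   Casorati determinant b_k (P_k Q_{k-1} - Q_k P_{k-1}) grows by
   (x - y) P_k Q_k at each step, so the sum telescopes to its values at the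
   two ends.  The p_{m+j}(x) solve the recurrence shifted by m, as do both
   families of associated polynomials, which differ only in the value
   assigned to Q_{-1}. *)

Lemma rec3_S c0 c1 al be l x :
  rec3 c0 c1 al be (S l) x
  = (snd (rec3 c0 c1 al be l x),
     ((x - al l) * snd (rec3 c0 c1 al be l x) - be l * fst (rec3 c0 c1 al be l x))
       / be (S l)).
Proof. simpl; now destruct (rec3 c0 c1 al be l x). Qed.

Lemma rec3_add c0 c1 al be k l x :
  rec3 c0 c1 al be (k + l) x
  = rec3 (fst (rec3 c0 c1 al be k x)) (snd (rec3 c0 c1 al be k x))
         (fun i => al (k + i)%nat) (fun i => be (k + i)%nat) l x.
Proof.
  induction l as [|l IH].
  - rewrite Nat.add_0_r; now destruct (rec3 c0 c1 al be k x).
  - now rewrite Nat.add_succ_r, !rec3_S, IH, Nat.add_succ_r.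
Qed.

Section ChristoffelDarboux.

Variables al be : nat -> R.

Definition rec3_solution (x : R) (P Pp : nat -> R) : Prop :=
  forall k, Pp (S k) = P k /\ be (S k) * P (S k) = (x - al k) * P k - be k * Pp k.

Lemma rec3_solves (be_neq0 : forall k, be k <> 0) c0 c1 x :
  rec3_solution x (fun k => snd (rec3 c0 c1 al be k x))
                  (fun k => fst (rec3 c0 c1 al be k x)).
Proof. intro k; rewrite rec3_S; split; [reflexivity | simpl; now field]. Qed.

Definition casorati (P Pp Q Qp : nat -> R) (k : nat) : R :=
  be k * (P k * Qp k - Q k * Pp k).

Lemma casorati_S x y P Pp Q Qp :
  rec3_solution x P Pp -> rec3_solution y Q Qp ->
  forall k, casorati P Pp Q Qp (S k) = casorati P Pp Q Qp k + (x - y) * P k * Q k.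
Proof.
  intros HP HQ k; destruct (HP k) as [Pp_S P_S], (HQ k) as [Qp_S Q_S].
  unfold casorati; rewrite Pp_S, Qp_S.
  replace (be (S k) * (P (S k) * Q k - Q (S k) * P k))
    with (be (S k) * P (S k) * Q k - be (S k) * Q (S k) * P k) by ring.
  rewrite P_S, Q_S; ring.
Qed.

Lemma christoffel_darboux x y P Pp Q Qp :
  rec3_solution x P Pp -> rec3_solution y Q Qp ->
  forall N, (x - y) * sum_f_R0 (fun k => P k * Q k) N
            = casorati P Pp Q Qp (S N) - casorati P Pp Q Qp O.
Proof.
  intros HP HQ; induction N as [|N IH]; simpl sum_f_R0.
  - rewrite (casorati_S _ _ _ _ _ _ HP HQ); ring.
  - rewrite Rmult_plus_distr_l, IH, (casorati_S _ _ _ _ _ _ HP HQ (S N)); ring.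
Qed.

End ChristoffelDarboux.

Lemma rec3_solution_shift al be m x P Pp :
  rec3_solution al be x P Pp ->
  rec3_solution (fun k => al (m + k)%nat) (fun k => be (m + k)%nat) x
                (fun k => P (m + k)%nat) (fun k => Pp (m + k)%nat).
Proof. intros HP k; rewrite Nat.add_succ_r; apply HP. Qed.

(* The recurrence of the associated polynomials started from q_{-1} = c0,
   q_0 = 1: [assoc_poly] is the case c0 = 0, and [scr_poly] the case
   c0 = ((1 - delta) y + gamma) / b_m, see [scr_poly_assoc_poly_ini]. *)
Definition assoc_poly_ini (a b : nat -> R) (m : nat) (c0 : R) (l : nat) (y : R) : R :=
  snd (rec3 c0 1 (fun k => a (m + k)%nat) (fun k => b (m + k)%nat) l y).

Lemma scr_poly_assoc_poly_ini a b m g d l y (b_neq0 : forall k, b k <> 0) :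
  scr_poly a b m g d l y = assoc_poly_ini a b m (((1 - d) * y + g) / b m) l y.
Proof.
  destruct l as [|l]; [reflexivity |].
  unfold assoc_poly_ini; rewrite (rec3_add _ _ _ _ 1 l); simpl.
  rewrite !Nat.add_0_r, Nat.add_1_r.
  do 2 f_equal; field; split; apply b_neq0.
Qed.

Lemma opoly_assoc_christoffel_darboux a b m c0 N x y (b_neq0 : forall k, b k <> 0) :
  (x - y) * sum_f_R0 (fun j => opoly a b (m + j) x * assoc_poly_ini a b m c0 j y) N
  = b (m + S N)%nat * (opoly a b (m + S N) x * assoc_poly_ini a b m c0 N y
                       - assoc_poly_ini a b m c0 (S N) y * opoly a b (m + N) x)
    - b m * (opoly a b m x * c0 - opoly_prev a b m x).
Proof.
  pose proof (rec3_solution_shift _ _ m _ _ _ (rec3_solves a b b_neq0 0 (/ b O) x)) as HP.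
  pose proof (rec3_solves (fun k => a (m + k)%nat) (fun k => b (m + k)%nat)
               (fun k => b_neq0 (m + k)%nat) c0 1 y) as HQ.
  etransitivity; [apply (christoffel_darboux _ _ _ _ _ _ _ _ HP HQ N) |].
  destruct (HP N) as [Pp_S _], (HQ N) as [Qp_S _]; cbv beta in Pp_S, Qp_S.
  unfold casorati, assoc_poly_ini, opoly, opoly_prev; rewrite Pp_S, Qp_S, Nat.add_0_r.
  simpl; ring.
Qed.

Theorem lemma3p1 (w : R -> R) (a b : nat -> R)
  (w_cont : forall t, -1 <= t <= 1 ->
     filterlim w (within (fun s => -1 <= s <= 1) (locally t)) (locally (w t)))
  (w_nonneg : forall t, -1 <= t <= 1 -> 0 <= w t)
  (b_pos : forall l, 0 < b l)
  (orthonormal : forall i j : nat,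
     RInt (fun t => opoly a b i t * opoly a b j t * w t) (-1) 1
     = if Nat.eqb i j then 1 else 0)
  (m n : nat) (hmn : (m <= n)%nat) (gamma delta : R) (hdelta : 0 <= delta)
  (x y : R) (hxy : x <> y) :
  sum_f_R0 (fun j => opoly a b (m + j) x * assoc_poly a b m j y) (n - m)
  = b (S n) * (opoly a b (S n) x * assoc_poly a b m (n - m) y
               - assoc_poly a b m (S (n - m)) y * opoly a b n x) / (x - y)
    + b m * opoly_prev a b m x / (x - y)
  /\
  sum_f_R0 (fun j => opoly a b (m + j) x * scr_poly a b m gamma delta j y) (n - m)
  = b (S n) * (opoly a b (S n) x * scr_poly a b m gamma delta (n - m) y
               - scr_poly a b m gamma delta (S (n - m)) y * opoly a b n x) / (x - y)
    + opoly a b m x * ((delta - 1) * y - gamma) / (x - y)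
    + b m * opoly_prev a b m x / (x - y).
Proof.
  assert (b_neq0 : forall l, b l <> 0) by (intro l; apply Rgt_not_eq, b_pos).
  assert (xy_neq0 : x - y <> 0) by now apply Rminus_eq_contra.
  destruct (Nat.le_exists_sub m n hmn) as [N [-> _]].
  replace (N + m - m)%nat with N by lia.
  replace (S (N + m)) with (m + S N)%nat by lia.
  replace (N + m)%nat with (m + N)%nat by lia.
  split; apply (Rmult_eq_reg_l (x - y)); try exact xy_neq0.
  - change (assoc_poly a b m) with (assoc_poly_ini a b m 0).
    rewrite (opoly_assoc_christoffel_darboux a b m 0 N x y b_neq0).
    now field.
  - rewrite (sum_eq _ _ _ (fun j _ =>
        f_equal (Rmult _) (scr_poly_assoc_poly_ini a b m gamma delta j y b_neq0))),
      (opoly_assoc_christoffel_darboux a b m _ N x y b_neq0),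
      !(scr_poly_assoc_poly_ini _ _ _ _ _ _ _ b_neq0).
    field; split; [exact xy_neq0 | exact (b_neq0 m)].
Qed.
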